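(* Let $[\mu]\in\mathbb PV_n$ be a critical point of $F_n$ with $\mathrm M_\mu=c_\mu I+D_\mu$, $c_\mu\in\mathbb R$, $D_\mu\in\mathrm{Der}(\mu)$. Then $\operatorname{tr}D_\mu=0$ if and only if $D_\mu=0$.
   Context: $V_n$ is the space of bilinear maps $\mu:\mathbb C^n\times\mathbb C^n\to\mathbb C^n$ with the standard Hermitian structures. $L^\mu_XY=\mu(X,Y)$, $R^\mu_XY=\mu(Y,X)$, and for an orthonormal basis $\{X_i\}$, $\mathrm M_\mu=2\sum_i L^\mu_{X_i}(L^\mu_{X_i})^*-2\sum_i (L^\mu_{X_i})^*L^\mu_{X_i}-2\sum_i (R^\mu_{X_i})^*R^\mu_{X_i}$ (a Hermitian matrix). $F_n([\mu])=\operatorname{tr}\mathrm M_\mu^2/\|\mu\|^4$; $[\mu]$ is a critical point of $F_n$ iff $\mathrm M_\mu=c_\mu I+D_\mu$ with $c_\mu\in\mathbb R$ and $D_\mu$ a derivation of $\mu$. *)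

(* complex numbers C = R[i] over a real closed field R
   (for R the real numbers this is the usual complex field). *)
From HB Require Import structures.
From mathcomp Require Import all_boot all_order all_algebra.
From mathcomp Require Import complex.
Set Implicit Arguments. Unset Strict Implicit. Unset Printing Implicit Defensive.
Import Order.TTheory GRing.Theory Num.Theory.
Local Open Scope ring_scope.

(* An element mu of V_n (a bilinear map C^n x C^n -> C^n) is given by its
   values on the standard (orthonormal) basis: mu i j = mu(e_i, e_j). *)
Definition bilin (R : rcfType) (n : nat) := 'I_n -> 'I_n -> 'cV[R[i]]_n.

Definition mu_app (R : rcfType) (n : nat) (mu : bilin R n)
  (X Y : 'cV[R[i]]_n) : 'cV[R[i]]_n :=
  \sum_(i < n) \sum_(j < n) (X i 0 * Y j 0) *: mu i j.

(* Matrices of L^mu_{e_i} (Y |-> mu(e_i,Y)) and R^mu_{e_i} (Y |-> mu(Y,e_i)). *)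
Definition Lmx (R : rcfType) (n : nat) (mu : bilin R n) (i : 'I_n) : 'M[R[i]]_n :=
  \matrix_(k, j) mu i j k 0.
Definition Rmx (R : rcfType) (n : nat) (mu : bilin R n) (i : 'I_n) : 'M[R[i]]_n :=
  \matrix_(k, j) mu j i k 0.

Definition adj (R : rcfType) (n : nat) (A : 'M[R[i]]_n) : 'M[R[i]]_n :=
  (map_mx Num.conj A)^T.

Definition Mmu (R : rcfType) (n : nat) (mu : bilin R n) : 'M[R[i]]_n :=
  2%:R *: (\sum_(i < n) Lmx mu i *m adj (Lmx mu i))
  - 2%:R *: (\sum_(i < n) adj (Lmx mu i) *m Lmx mu i)
  - 2%:R *: (\sum_(i < n) adj (Rmx mu i) *m Rmx mu i).

Definition is_derivation (R : rcfType) (n : nat) (mu : bilin R n)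
  (D : 'M[R[i]]_n) : Prop :=
  forall X Y : 'cV[R[i]]_n,
    D *m mu_app mu X Y = mu_app mu (D *m X) Y + mu_app mu X (D *m Y).

(* mu is nonzero (so that [mu] is a point of PV_n). *)
Definition bilin_nonzero (R : rcfType) (n : nat) (mu : bilin R n) : Prop :=
  exists i j, mu i j != 0.

From HB Require Import structures.
From mathcomp Require Import all_boot all_order all_algebra.
From mathcomp Require Import complex.
Import Order.TTheory GRing.Theory Num.Theory.
Local Open Scope ring_scope.
Local Open Scope complex_scope.

(* Write M = M_mu, L_i = L^mu_{e_i}, R_i = R^mu_{e_i}, and
   A^H for the Hermitian adjoint adj A.
   1. M is Hermitian: it is a real combination of sums of matrices A A^H
      and A^H A.
   2. For every derivation D, tr(M D) = 0.  A derivation satisfies the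
      commutator identity [D, L_i] = L_{D e_i} = sum_m D_{mi} L_m; with
      tr(L L^H D) - tr(L^H L D) = tr(L^H [D, L]) this gives
        tr((sum L_i L_i^H - sum L_i^H L_i) D) = sum_{i,m} D_{mi} tr(L_i^H L_m),
      and the duality identity (sum_j R_j^H R_j)_{lk} = tr(L_l^H L_k) shows
      that tr((sum R_j^H R_j) D) is the very same sum.
   3. If M = cI + D with c real, then D = M - cI is Hermitian, so
      tr(D D^H) = tr(D^2) = tr(M D) - c tr D; hence tr D = 0 forces
      sum |D_lk|^2 = 0, i.e. D = 0.
   The file first develops the Hermitian adjoint, then derivations and the
   trace identity of step 2, and derives the theorem at the end. *)

Section Adjoint.
Variables (R : rcfType) (n : nat).
Implicit Types A B : 'M[R[i]]_n.

Lemma adj_mul A B : adj (A *m B) = adj B *m adj A.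
Proof. by rewrite /adj map_mxM trmx_mul. Qed.

Lemma adjK A : adj (adj A) = A.
Proof. by apply/matrixP => k l; rewrite !mxE conjCK. Qed.

Lemma adjB A B : adj (A - B) = adj A - adj B.
Proof. by rewrite /adj map_mxB linearB. Qed.

(* Natural-number scalars are real, so they commute with the adjoint. *)
Lemma adj_natZ (m : nat) A : adj (m%:R *: A) = m%:R *: adj A.
Proof. by rewrite /adj map_mxZ linearZ /= rmorph_nat. Qed.

Lemma adj_sum (I : finType) (F : I -> 'M[R[i]]_n) :
  adj (\sum_i F i) = \sum_i adj (F i).
Proof. by rewrite /adj map_mx_sum linear_sum. Qed.

Lemma adj_realC (c : R) : adj ((c%:C)%:M : 'M[R[i]]_n) = (c%:C)%:M.
Proof.
apply/matrixP => k l; rewrite !mxE eq_sym rmorphMn /=.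
by congr (_ *+ _); apply/eqP; rewrite -CrealE realE !lecR le_total.
Qed.

Lemma trace_mul_adj A : \tr (A *m adj A) = \sum_l \sum_k `|A l k| ^+ 2.
Proof.
rewrite /mxtrace; apply: eq_bigr => l _; rewrite mxE.
by apply: eq_bigr => k _; rewrite !mxE normCK.
Qed.

Lemma trace_mul_adj_eq0 A : \tr (A *m adj A) = 0 -> A = 0.
Proof.
rewrite trace_mul_adj => /eqP; rewrite psumr_eq0 => [/allP Hl|l _]; last first.
  by rewrite sumr_ge0 // => k _; rewrite exprn_ge0.
apply/matrixP => l k; rewrite mxE.
move: (Hl l (mem_index_enum l)); rewrite psumr_eq0 => [/allP Hk|k' _].
  by move: (Hk k (mem_index_enum k)); rewrite sqrf_eq0 normr_eq0 => /eqP.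
by rewrite exprn_ge0.
Qed.
End Adjoint.

Section Derivation.
Variables (R : rcfType) (n : nat) (mu : bilin R n).
Local Notation L := (Lmx mu).
Local Notation Rm := (Rmx mu).

Lemma mu_app_deltar (X : 'cV[R[i]]_n) j :
  mu_app mu X (delta_mx j 0) = \sum_p X p 0 *: mu p j.
Proof.
apply: eq_bigr => p _; rewrite (bigD1 j) //= big1 ?addr0.
  by rewrite mxE !eqxx mulr1.
by move=> q /negbTE qj; rewrite mxE qj mulr0 scale0r.
Qed.

Lemma mu_app_deltal (Y : 'cV[R[i]]_n) i :
  mu_app mu (delta_mx i 0) Y = \sum_q Y q 0 *: mu i q.
Proof.
rewrite /mu_app (bigD1 i) //= [X in _ + X]big1 ?addr0.
  by apply: eq_bigr => q _; rewrite mxE !eqxx mul1r.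
by move=> p /negbTE pi; apply: big1 => q _; rewrite mxE pi mul0r scale0r.
Qed.

Lemma mu_app_delta i j : mu_app mu (delta_mx i 0) (delta_mx j 0) = mu i j.
Proof.
rewrite mu_app_deltar (bigD1 i) //= big1 ?addr0; first by rewrite mxE !eqxx scale1r.
by move=> p /negbTE pi; rewrite mxE pi scale0r.
Qed.

Lemma derivation_coord D i j l : is_derivation mu D ->
  \sum_k D l k * mu i j k 0 =
  \sum_m D m i * mu m j l 0 + \sum_m D m j * mu i m l 0.
Proof.
move=> HD.
have := congr1 (fun v : 'cV[R[i]]_n => v l 0) (HD (delta_mx i 0) (delta_mx j 0)).
rewrite mu_app_delta mu_app_deltar mu_app_deltal -!colE !mxE !summxE => ->.
by congr (_ + _); apply: eq_bigr => m _; rewrite !mxE.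
Qed.

(* Matrix form of the same identity: [D, L_i] = L_{D e_i}. *)
Lemma derivation_commutator D i : is_derivation mu D ->
  D *m L i - L i *m D = \sum_m D m i *: L m.
Proof.
move=> HD; apply/matrixP => l j; rewrite /Lmx !mxE !summxE.
under eq_bigr do rewrite mxE.
under [in X in _ - X]eq_bigr do rewrite mxE mulrC.
under [RHS]eq_bigr do rewrite !mxE.
by rewrite derivation_coord // addrK.
Qed.

Lemma adj_Mmu : adj (Mmu mu) = Mmu mu.
Proof.
rewrite /Mmu !adjB !adj_natZ !adj_sum.
under eq_bigr do rewrite adj_mul adjK.
under [in X in _ - X - _]eq_bigr do rewrite adj_mul adjK.
by under [in X in _ - X]eq_bigr do rewrite adj_mul adjK.
Qed.

(* Duality between right and left multiplications: both sides equal
   sum_{j,p} conj(mu(e_l, e_j)_p) mu(e_k, e_j)_p. *)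
Lemma sum_adjR_mulR l k :
  (\sum_j adj (Rm j) *m Rm j) l k = \tr (adj (L l) *m L k).
Proof.
rewrite summxE /mxtrace; apply: eq_bigr => j _; rewrite !mxE.
by apply: eq_bigr => p _; rewrite !mxE.
Qed.

Lemma trace_Mmu_derivation D : is_derivation mu D -> \tr (Mmu mu *m D) = 0.
Proof.
move=> HD.
(* G i m is the Hermitian product of L_i and L_m; both trace terms reduce to
   the pairing of D with G. *)
pose G i m := \tr (adj (L i) *m L m).
have trL : \tr ((\sum_i L i *m adj (L i)) *m D)
         - \tr ((\sum_i adj (L i) *m L i) *m D) = \sum_i \sum_m D m i * G i m.
  rewrite -raddfB -mulmxBl -sumrB mulmx_suml raddf_sum /=; apply: eq_bigr => i _.
  rewrite mulmxBl raddfB /= -!mulmxA mxtrace_mulC -mulmxA -raddfB /= -mulmxBr.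
  rewrite derivation_commutator // mulmx_sumr raddf_sum /=.
  by apply: eq_bigr => m _; rewrite -scalemxAr linearZ.
have trR : \tr ((\sum_j adj (Rm j) *m Rm j) *m D) = \sum_i \sum_m D m i * G i m.
  rewrite /mxtrace; apply: eq_bigr => i _; rewrite mxE.
  by apply: eq_bigr => m _; rewrite sum_adjR_mulR mulrC.
by rewrite /Mmu !mulmxBl -!scalemxAl -!scalerBr linearZ /= !linearB /= trL trR subrr mulr0.
Qed.
End Derivation.

Theorem mainTheorem6 (R : rcfType) (n : nat) (mu : bilin R n)
  (c : R) (D : 'M[R[i]]_n) :
  bilin_nonzero mu ->
  is_derivation mu D ->
  Mmu mu = (c%:C)%:M + D ->
  (\tr D = 0 <-> D = 0).
Proof.
move=> _ HD HM; split=> [trD0|->]; last exact: mxtrace0.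
(* D = M_mu - c I is Hermitian, so tr(D D^H) = tr(D D) = tr(M_mu D) - c tr D. *)
have D_herm : adj D = D.
  have -> : D = Mmu mu - (c%:C)%:M by rewrite HM addrAC subrr add0r.
  by rewrite adjB adj_realC adj_Mmu.
apply: trace_mul_adj_eq0; rewrite D_herm.
have := @trace_Mmu_derivation _ _ _ _ HD.
by rewrite HM mulmxDl mul_scalar_mx mxtraceD linearZ /= trD0 mulr0 add0r.
Qed.
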